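(* For each $n\ge1$ let $f_n:\{1,\dots,n\}^2\to[0,\infty)$ be non-decreasing in each of its two arguments separately. Suppose that $\liminf_{n\to\infty}f_n(p_n,q_n)>0$ for every sequence $\{(p_n,q_n)\}$ with $1\le q_n\le p_n\le n$ satisfying any one of the following conditions: (i) $q_n\equiv1$ and $\lim_{n\to\infty}p_n/n$ exists and lies in $(0,1)$; (ii) $q_n\to\infty$, $\lim_{n\to\infty}q_n/p_n=0$, and $\lim_{n\to\infty}p_nq_n/n$ exists and lies in $(0,\infty)$; (iii) $\lim_{n\to\infty}p_n/\sqrt n$ and $\lim_{n\to\infty}q_n/\sqrt n$ exist and lie in $(0,\infty)$. Then $\liminf_{n\to\infty}f_n(p_n,q_n)>0$ for every sequence $\{(p_n,q_n)\}$ with $1\le q_n\le p_n\le n$ such that $\lim_{n\to\infty}p_nq_n/n$ exists and lies in $(0,\infty)$. *)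

From Stdlib Require Import Reals.
From Coquelicot Require Import Coquelicot.
Open Scope R_scope.

(* f n p q is f_n(p,q); only values with 1 <= p,q <= n matter. *)
Definition admissible_f (f : nat -> nat -> nat -> R) : Prop :=
  forall n : nat, (1 <= n)%nat ->
    (forall p q, (1 <= p <= n)%nat -> (1 <= q <= n)%nat -> 0 <= f n p q) /\
    (forall p p' q, (1 <= p)%nat -> (p <= p')%nat -> (p' <= n)%nat ->
        (1 <= q <= n)%nat -> f n p q <= f n p' q) /\
    (forall p q q', (1 <= p <= n)%nat -> (1 <= q)%nat -> (q <= q')%nat ->
        (q' <= n)%nat -> f n p q <= f n p q').

Definition admissible_seq (p q : nat -> nat) : Prop :=
  forall n : nat, (1 <= n)%nat -> (1 <= q n)%nat /\ (q n <= p n)%nat /\ (p n <= n)%nat.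

Definition liminf_pos (f : nat -> nat -> nat -> R) (p q : nat -> nat) : Prop :=
  Rbar_lt (Finite 0) (LimInf_seq (fun n => f n (p n) (q n))).

Definition lim_in (u : nat -> R) (a b : R) : Prop :=
  exists l : R, is_lim_seq u (Finite l) /\ a < l < b.

Definition lim_in_pos (u : nat -> R) : Prop :=
  exists l : R, is_lim_seq u (Finite l) /\ 0 < l.

Definition cond_i (p q : nat -> nat) : Prop :=
  (forall n, q n = 1%nat) /\ lim_in (fun n => INR (p n) / INR n) 0 1.

Definition cond_ii (p q : nat -> nat) : Prop :=
  is_lim_seq (fun n => INR (q n)) p_infty /\
  is_lim_seq (fun n => INR (q n) / INR (p n)) (Finite 0) /\
  lim_in_pos (fun n => INR (p n) * INR (q n) / INR n).

Definition cond_iii (p q : nat -> nat) : Prop :=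
  lim_in_pos (fun n => INR (p n) / sqrt (INR n)) /\
  lim_in_pos (fun n => INR (q n) / sqrt (INR n)).

From Stdlib Require Import Reals Lra Lia ZArith Classical ClassicalEpsilon.
From Coquelicot Require Import Coquelicot.
Open Scope R_scope.

(* Let c = lim p_n q_n / n and split the indices by a threshold k.  Where q_n <= k,
   p_n >= c n / 2k, so (p_n, q_n) dominates (a n, 1), a sequence of type (i); where
   p_n <= (k+1) q_n, q_n^2 >= c n / 2(k+1), so both coordinates dominate b sqrt n, a sequence
   of type (iii).  By monotonicity f_n(p_n, q_n) is bounded away from 0 on these indices, for
   every k.  On the "steep" indices (q_n > k, p_n > (k+1) q_n) it is so for some k: otherwise
   a diagonal subsequence along which f_n(p_n, q_n) -> 0 is steep to every order, and
   completing it off the subsequence by a fixed sequence of type (ii) with the same limit c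
   gives a sequence of type (ii) with liminf 0. *)

Definition nat_floor (x : R) : nat := Z.to_nat (Int_part x).

Lemma nat_floor_spec (x : R) : 0 <= x -> INR (nat_floor x) <= x < INR (nat_floor x) + 1.
Proof.
  intros Hx. destruct (base_Int_part x) as [Hle Hlt].
  assert (Hgt : (-1 < Int_part x)%Z) by (apply lt_IZR; simpl; lra).
  unfold nat_floor. rewrite INR_IZR_INZ, Z2Nat.id by lia. lra.
Qed.

Lemma nat_floor_le (x : R) (m : nat) : 0 <= x -> x <= INR m -> (nat_floor x <= m)%nat.
Proof. intros Hx Hxm. apply INR_le. pose proof (nat_floor_spec x Hx). lra. Qed.

Lemma le_nat_floor (x : R) (m : nat) : INR m <= x -> (m <= nat_floor x)%nat.
Proof.
  intros Hmx. pose proof (pos_INR m).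
  destruct (nat_floor_spec x ltac:(lra)) as [_ Hlt].
  assert (Hm : INR m < INR (S (nat_floor x))) by (rewrite S_INR; lra).
  apply INR_lt in Hm. lia.
Qed.

Definition pos_floor (x : R) : nat := Nat.max 1 (nat_floor x).

Lemma pos_floor_close (x : R) : 0 <= x -> Rabs (INR (pos_floor x) - x) <= 1.
Proof.
  intros Hx. destruct (nat_floor_spec x Hx) as [Hle Hlt]. unfold pos_floor.
  destruct (Nat.max_spec 1 (nat_floor x)) as [[_ ->] | [Hle1 ->]];
    apply Rabs_le.
  - lra.
  - apply le_INR in Hle1. simpl in *. lra.
Qed.

Lemma pos_floor_le (x : R) (m : nat) : 0 <= x -> x <= INR m -> (1 <= m)%nat ->
  (pos_floor x <= m)%nat.
Proof.
  intros Hx Hxm Hm. apply Nat.max_lub; [exact Hm | now apply nat_floor_le].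
Qed.

Lemma eventually_ge (N : nat) : eventually (fun n => (N <= n)%nat).
Proof. now exists N. Qed.

Lemma is_lim_seq_div_close (x y g h : nat -> R) (l : R) :
  is_lim_seq (fun n => h n / g n) 0 ->
  eventually (fun n => 0 < g n) ->
  eventually (fun n => Rabs (y n - x n) <= h n) ->
  is_lim_seq (fun n => x n / g n) l ->
  is_lim_seq (fun n => y n / g n) l.
Proof.
  intros Hh Hg Hyx Hx.
  assert (Herr : is_lim_seq (fun n => (y n - x n) / g n) 0).
  { apply is_lim_seq_abs_0.
    apply is_lim_seq_le_le_loc with (fun _ => 0) (fun n => h n / g n);
      [| apply is_lim_seq_const | exact Hh].
    generalize (filter_and _ _ Hg Hyx). apply filter_imp. intros n [Hgn Hyxn].
    split; [apply Rabs_pos|].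
    unfold Rdiv. rewrite Rabs_mult, Rabs_inv, (Rabs_pos_eq (g n)) by lra.
    apply Rmult_le_compat_r; [left; apply Rinv_0_lt_compat|]; lra. }
  apply is_lim_seq_ext with (fun n => x n / g n + (y n - x n) / g n).
  { intros n. unfold Rdiv. ring. }
  replace (Finite l) with (Rbar_plus l 0) by (simpl; f_equal; ring).
  now apply is_lim_seq_plus'.
Qed.

Lemma is_lim_seq_pos_floor (a : R) (g : nat -> R) :
  0 <= a -> (forall n, 0 <= g n) -> is_lim_seq g p_infty ->
  is_lim_seq (fun n => INR (pos_floor (a * g n)) / g n) a.
Proof.
  intros Ha Hg Hlim.
  assert (Hpos : eventually (fun n => 0 < g n)) by exact (proj2 (is_lim_seq_spec _ _) Hlim 0).
  apply is_lim_seq_div_close with (x := fun n => a * g n) (h := fun _ => 1).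
  - apply is_lim_seq_ext with (fun n => / g n); [intros n; unfold Rdiv; ring|].
    now apply (is_lim_seq_inv _ p_infty).
  - exact Hpos.
  - apply filter_forall. intros n. apply pos_floor_close, Rmult_le_pos; auto.
  - apply is_lim_seq_ext_loc with (fun _ => a); [|apply is_lim_seq_const].
    revert Hpos. apply filter_imp. intros n Hn. field. lra.
Qed.

Lemma is_lim_seq_sqrt_INR : is_lim_seq (fun n => sqrt (INR n)) p_infty.
Proof. eapply filterlim_comp; [apply is_lim_seq_INR | apply filterlim_sqrt_p]. Qed.

Definition patch {A : Type} (S : nat -> Prop) (u v : nat -> A) (n : nat) : A :=
  if excluded_middle_informative (S n) then u n else v n.

Lemma is_lim_seq_patch (S : nat -> Prop) (u v : nat -> R) (l : Rbar) :
  filterlim u (within S eventually) (Rbar_locally l) -> is_lim_seq v l ->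
  is_lim_seq (patch S u v) l.
Proof.
  intros Hu Hv P HP.
  assert (HuP : eventually (fun n => S n -> P (u n))) by exact (Hu P HP).
  generalize (filter_and _ _ HuP (Hv P HP)). unfold filtermap. apply filter_imp.
  intros n [Hun Hvn]. unfold patch. destruct (excluded_middle_informative (S n)); auto.
Qed.

Lemma increasing_choice (P : nat -> nat -> Prop) :
  (forall k N, exists n, (N <= n)%nat /\ P k n) ->
  exists phi : nat -> nat,
    (forall j k, (j < k)%nat -> (phi j < phi k)%nat) /\ forall k, P k (phi k).
Proof.
  intros H.
  set (g k N := proj1_sig (constructive_indefinite_description _ (H k N))).
  assert (Hg : forall k N, (N <= g k N)%nat /\ P k (g k N)).
  { intros k N. exact (proj2_sig (constructive_indefinite_description _ (H k N))). }
  clearbody g.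
  set (phi := fix phi k := match k with O => g O O | S k' => g k (S (phi k')) end).
  assert (Hstep : forall k, (phi k < phi (S k))%nat).
  { intros k. exact (proj1 (Hg (S k) (S (phi k)))). }
  exists phi. split.
  - intros j k Hjk. induction Hjk as [|k Hjk IH]; [apply Hstep|].
    apply Nat.lt_trans with (phi k); [exact IH | apply Hstep].
  - intros [|k]; apply Hg.
Qed.

Definition away_from_0_on (S : nat -> Prop) (u : nat -> R) : Prop :=
  exists d, 0 < d /\ within S eventually (fun n => d <= u n).

Lemma LimInf_seq_gt_0_iff (u : nat -> R) :
  Rbar_lt 0 (LimInf_seq u) <-> away_from_0_on (fun _ => True) u.
Proof.
  split.
  - destruct (ex_LimInf_seq u) as [l Hl]. rewrite (is_LimInf_seq_unique _ _ Hl).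
    destruct l as [l| |]; simpl; intros Hpos; try contradiction.
    + assert (Hhalf : 0 < l / 2) by lra.
      destruct (Hl (mkposreal _ Hhalf)) as [_ [N HN]]. exists (l / 2). split; [exact Hhalf|].
      exists N. intros n Hn _. specialize (HN n Hn). simpl in HN. lra.
    + destruct (Hl 1) as [N HN]. exists 1. split; [lra|].
      exists N. intros n Hn _. left. exact (HN n Hn).
  - intros [d [Hd [N HN]]].
    assert (Hle : Rbar_le (LimInf_seq (fun _ => d)) (LimInf_seq u)).
    { apply LimInf_le. exists N. intros n Hn. exact (HN n Hn I). }
    rewrite LimInf_seq_const in Hle. destruct (LimInf_seq u); simpl in *; lra.
Qed.

Lemma away_from_0_on_sub (S T : nat -> Prop) (u : nat -> R) :
  (forall n, T n -> S n) -> away_from_0_on S u -> away_from_0_on T u.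
Proof.
  intros HTS [d [Hd Hev]]. exists d. split; [exact Hd|].
  unfold within in *. revert Hev. apply filter_imp. auto.
Qed.

Lemma away_from_0_on_or (S T : nat -> Prop) (u : nat -> R) :
  away_from_0_on S u -> away_from_0_on T u -> away_from_0_on (fun n => S n \/ T n) u.
Proof.
  intros [d [Hd HS]] [e [He HT]]. exists (Rmin d e). split; [now apply Rmin_pos|].
  unfold within in *. generalize (filter_and _ _ HS HT). apply filter_imp.
  intros n [HSn HTn] [Hn | Hn]; [specialize (HSn Hn) | specialize (HTn Hn)];
    [pose proof (Rmin_l d e) | pose proof (Rmin_r d e)]; lra.
Qed.

Lemma admissible_f_le (f : nat -> nat -> nat -> R) (n P Q p q : nat) :
  admissible_f f -> (1 <= P <= p)%nat -> (p <= n)%nat -> (1 <= Q <= q)%nat -> (q <= n)%nat ->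
  f n P Q <= f n p q.
Proof.
  intros Hf HP Hp HQ Hq. destruct (Hf n ltac:(lia)) as [_ [Hmono_p Hmono_q]].
  apply Rle_trans with (f n p Q); [apply Hmono_p | apply Hmono_q]; lia.
Qed.

Lemma away_from_0_on_dominated (f : nat -> nat -> nat -> R) (p q P Q : nat -> nat)
    (S : nat -> Prop) :
  admissible_f f -> admissible_seq p q -> admissible_seq P Q -> liminf_pos f P Q ->
  within S eventually (fun n => P n <= p n /\ Q n <= q n)%nat ->
  away_from_0_on S (fun n => f n (p n) (q n)).
Proof.
  intros Hf Hpq HPQ HPQpos Hdom.
  destruct (proj1 (LimInf_seq_gt_0_iff _) HPQpos) as [d [Hd HPQd]].
  assert (Hge1 := eventually_ge 1).
  exists d. split; [exact Hd|]. unfold within in *.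
  generalize (filter_and _ _ (filter_and _ _ HPQd Hdom) Hge1).
  apply filter_imp. intros n [[HdP Hle] Hn] HSn.
  destruct (Hle HSn). destruct (Hpq n Hn) as (? & ? & ?). destruct (HPQ n Hn) as (? & ? & ?).
  eapply Rle_trans; [exact (HdP I) | apply admissible_f_le; auto; lia].
Qed.

Definition fourth_root (n : nat) : nat := Nat.sqrt (Nat.sqrt n).

Lemma fourth_root_ge (m n : nat) : (m * m * (m * m) <= n)%nat -> (m <= fourth_root n)%nat.
Proof. intros Hmn. do 2 apply -> Nat.sqrt_le_square. exact Hmn. Qed.

Lemma fourth_root_le (n : nat) : (fourth_root n <= n)%nat.
Proof.
  apply Nat.le_trans with (Nat.sqrt n); [apply Nat.sqrt_le_lin|]. apply Nat.sqrt_le_lin.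
Qed.

Lemma fourth_root_spec (n : nat) : (1 <= n)%nat ->
  let r := fourth_root n in (1 <= r)%nat /\ (r * r * (r * r) <= n)%nat.
Proof.
  intros Hn r. split; [now apply fourth_root_ge|].
  destruct (Nat.sqrt_spec' n) as [Hs _]. destruct (Nat.sqrt_spec' (Nat.sqrt n)) as [Hr _].
  apply Nat.le_trans with (Nat.sqrt n * Nat.sqrt n)%nat; [now apply Nat.mul_le_mono | exact Hs].
Qed.

Lemma is_lim_seq_fourth_root : is_lim_seq (fun n => INR (fourth_root n)) p_infty.
Proof.
  apply is_lim_seq_spec. intros M. destruct (INR_unbounded M) as [m Hm].
  exists (m * m * (m * m))%nat. intros n Hn.
  apply fourth_root_ge, le_INR in Hn. lra.
Qed.

Lemma is_lim_seq_fourth_root_sq_div :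
  is_lim_seq (fun n => INR (fourth_root n) * INR (fourth_root n) / INR n) 0.
Proof.
  apply is_lim_seq_le_le_loc with (fun _ => 0) (fun n => / INR (fourth_root n));
    [| apply is_lim_seq_const
     | apply (is_lim_seq_inv _ p_infty); [exact is_lim_seq_fourth_root | discriminate]].
  exists 1%nat. intros n Hn. destruct (fourth_root_spec n Hn) as [Hr1 Hr4].
  set (r := fourth_root n) in *.
  apply le_INR in Hr1, Hr4. rewrite !mult_INR in Hr4. simpl in Hr1.
  assert (Hn0 : 0 < INR n) by (apply lt_0_INR; lia).
  split; [apply Rle_mult_inv_pos; nra|].
  apply Rmult_le_reg_r with (INR n * INR r); [nra|].
  field_simplify; nra.
Qed.

Lemma is_lim_seq_fourth_root_div : is_lim_seq (fun n => INR (fourth_root n) / INR n) 0.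
Proof.
  apply is_lim_seq_le_le_loc with (fun _ => 0)
    (fun n => INR (fourth_root n) * INR (fourth_root n) / INR n);
    [| apply is_lim_seq_const | exact is_lim_seq_fourth_root_sq_div].
  exists 1%nat. intros n Hn. destruct (fourth_root_spec n Hn) as [Hr1 Hr4].
  apply le_INR in Hr1. simpl in Hr1. assert (Hn0 : 0 < INR n) by (apply lt_0_INR; lia).
  unfold Rdiv. split; [apply Rmult_le_pos; [lra | left; now apply Rinv_0_lt_compat]|].
  apply Rmult_le_compat_r; [left; now apply Rinv_0_lt_compat | nra].
Qed.

Section Steep_reference.

Variable c : R.
Hypothesis Hc : 0 < c.

Let target (n : nat) : R := c * INR n / INR (fourth_root n).

(* About c n / n^(1/4), clamped to [n^(1/4), n] so that it is admissible for every n. *)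
Definition steep_ref (n : nat) : nat :=
  Nat.min n (Nat.max (fourth_root n) (nat_floor (target n))).

Lemma steep_ref_admissible : admissible_seq steep_ref fourth_root.
Proof.
  intros n Hn. destruct (fourth_root_spec n Hn) as [Hr1 Hr4].
  assert (Hrn := fourth_root_le n).
  unfold steep_ref. lia.
Qed.

Lemma target_spec (n : nat) : (1 <= n)%nat ->
  INR (fourth_root n) * target n = c * INR n /\ 0 <= target n.
Proof.
  intros Hn. destruct (fourth_root_spec n Hn) as [Hr1 _]. apply le_INR in Hr1. simpl in Hr1.
  pose proof (pos_INR n). unfold target. split.
  - field. lra.
  - apply Rle_mult_inv_pos; nra.
Qed.

Lemma steep_ref_eventually_floor : eventually (fun n => steep_ref n = nat_floor (target n)).
Proof.
  assert (Hbig := proj2 (is_lim_seq_spec _ _) is_lim_seq_fourth_root (c + / c)).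
  assert (Hge1 := eventually_ge 1).
  generalize (filter_and _ _ Hbig Hge1). apply filter_imp. intros n [Hrbig Hn].
  destruct (fourth_root_spec n Hn) as [Hr1 Hr4].
  apply le_INR in Hr1, Hr4. rewrite !mult_INR in Hr4. simpl in Hr1.
  assert (Hic : 0 < / c) by now apply Rinv_0_lt_compat.
  assert (Hcr : 1 < c * INR (fourth_root n)).
  { replace 1 with (c * / c) by (field; lra). apply Rmult_lt_compat_l; lra. }
  destruct (target_spec n Hn) as [Htarget Htarget0].
  assert (Hlow : (fourth_root n <= nat_floor (target n))%nat).
  { apply le_nat_floor, Rmult_le_reg_l with (INR (fourth_root n)); [lra|]. rewrite Htarget.
    set (x := INR (fourth_root n)) in *.
    assert (Hx3 : x * x <= x * x * x) by nra.
    assert (Hcx : x * x * x <= c * x * (x * x * x)) by nra.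
    assert (Hcn : c * (x * x * (x * x)) <= c * INR n) by nra.
    nra. }
  assert (Hup : (nat_floor (target n) <= n)%nat).
  { apply nat_floor_le; [exact Htarget0|].
    apply Rmult_le_reg_l with (INR (fourth_root n)); [lra|]. nra. }
  unfold steep_ref. lia.
Qed.

Lemma is_lim_seq_steep_ref_prod :
  is_lim_seq (fun n => INR (steep_ref n) * INR (fourth_root n) / INR n) c.
Proof.
  assert (Hge1 := eventually_ge 1).
  apply is_lim_seq_div_close with (x := fun n => c * INR n) (h := fun n => INR (fourth_root n)).
  - exact is_lim_seq_fourth_root_div.
  - revert Hge1. apply filter_imp. intros n Hn. apply lt_0_INR. lia.
  - generalize (filter_and _ _ steep_ref_eventually_floor Hge1). apply filter_imp.
    intros n [-> Hn]. destruct (target_spec n Hn) as [<- Htarget0].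
    destruct (fourth_root_spec n Hn) as [Hr1 _]. apply le_INR in Hr1. simpl in Hr1.
    destruct (nat_floor_spec _ Htarget0). apply Rabs_le. split; nra.
  - apply is_lim_seq_ext_loc with (fun _ => c); [|apply is_lim_seq_const].
    revert Hge1. apply filter_imp. intros n Hn. field. apply not_0_INR. lia.
Qed.

Lemma is_lim_seq_steep_ref_ratio :
  is_lim_seq (fun n => INR (fourth_root n) / INR (steep_ref n)) 0.
Proof.
  apply is_lim_seq_ext_loc with
    (fun n => (INR (fourth_root n) * INR (fourth_root n) / INR n)
              / (INR (steep_ref n) * INR (fourth_root n) / INR n)).
  - exists 1%nat. intros n Hn. destruct (steep_ref_admissible n Hn) as (Hr1 & Hrp & _).
    apply le_INR in Hr1, Hrp. simpl in Hr1. assert (0 < INR n) by (apply lt_0_INR; lia).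
    field. lra.
  - replace (Finite 0) with (Finite (0 / c)) by (f_equal; field; lra).
    apply is_lim_seq_div';
      [exact is_lim_seq_fourth_root_sq_div | exact is_lim_seq_steep_ref_prod | lra].
Qed.

End Steep_reference.

Section Steep_along.

Variables (p q : nat -> nat) (T : nat -> Prop).
Hypothesis Hsteep : forall m, within T eventually (fun n => m < q n /\ S m * q n < p n)%nat.

Lemma filterlim_steep_q :
  filterlim (fun n => INR (q n)) (within T eventually) (Rbar_locally p_infty).
Proof.
  intros Pr [M HM]. destruct (INR_unbounded M) as [m Hm].
  generalize (Hsteep m). unfold filtermap, within. apply filter_imp. intros n Hn HTn.
  apply HM. destruct (Hn HTn) as [Hmq _]. apply lt_INR in Hmq. lra.
Qed.

Lemma filterlim_steep_ratio :
  filterlim (fun n => INR (q n) / INR (p n)) (within T eventually) (Rbar_locally 0).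
Proof.
  intros Pr [eps HP]. pose proof (cond_pos eps). destruct (INR_unbounded (/ eps)) as [m Hm].
  generalize (Hsteep m). unfold filtermap, within. apply filter_imp. intros n Hn HTn.
  apply HP. destruct (Hn HTn) as [Hmq Hqp].
  apply lt_INR in Hmq, Hqp. rewrite mult_INR, S_INR in Hqp. pose proof (pos_INR m).
  assert (Hp0 : 0 < INR (p n)) by nra.
  assert (Heps_m : 1 < eps * (INR m + 1)).
  { assert (Hinv : / eps < INR m + 1) by lra.
    apply (Rmult_lt_compat_l eps) in Hinv; [|lra]. now rewrite Rinv_r in Hinv by lra. }
  change (Rabs (INR (q n) / INR (p n) - 0) < eps).
  rewrite Rminus_0_r, Rabs_pos_eq by (apply Rle_mult_inv_pos; [apply pos_INR | lra]).
  apply Rmult_lt_reg_r with (INR (p n)); [lra|].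
  unfold Rdiv. rewrite Rmult_assoc, Rinv_l, Rmult_1_r by lra. nra.
Qed.

End Steep_along.

Section Reduction.

Variable f : nat -> nat -> nat -> R.
Hypothesis Hf : admissible_f f.
Hypothesis Hcond : forall p q : nat -> nat, admissible_seq p q ->
  (cond_i p q \/ cond_ii p q \/ cond_iii p q) -> liminf_pos f p q.

Variables p q : nat -> nat.
Hypothesis Hpq : admissible_seq p q.
Variable c : R.
Hypothesis Hc : 0 < c.
Hypothesis Hlim : is_lim_seq (fun n => INR (p n) * INR (q n) / INR n) c.

Let F (n : nat) : R := f n (p n) (q n).

Lemma prod_eventually_ge : eventually (fun n => c / 2 * INR n <= INR (p n) * INR (q n)).
Proof.
  assert (Hhalf : 0 < c / 2) by lra.
  assert (Hge1 := eventually_ge 1).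
  generalize (filter_and _ _ (proj2 (is_lim_seq_spec _ _) Hlim (mkposreal _ Hhalf)) Hge1).
  apply filter_imp. intros n [Hclose Hn]. simpl in Hclose.
  apply Rabs_lt_between' in Hclose. destruct Hclose as [Hlow _].
  assert (Hn0 : 0 < INR n) by (apply lt_0_INR; lia).
  apply Rmult_lt_compat_r with (r := INR n) in Hlow; [|exact Hn0].
  unfold Rdiv in Hlow. rewrite Rmult_assoc, Rinv_l in Hlow by lra. lra.
Qed.

Lemma away_on_bounded_q (K : nat) : away_from_0_on (fun n => q n <= K)%nat F.
Proof.
  set (a := Rmin (1 / 2) (c / 2 / (INR K + 1))).
  assert (HK : 0 < INR K + 1) by (pose proof (pos_INR K); lra).
  assert (Ha0 : 0 < a) by (apply Rmin_pos; [lra | apply Rdiv_lt_0_compat; lra]).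
  assert (Ha1 : a < 1) by (unfold a; pose proof (Rmin_l (1 / 2) (c / 2 / (INR K + 1))); lra).
  set (P n := pos_floor (a * INR n)).
  assert (HP : forall n, (1 <= n)%nat -> (1 <= P n <= n)%nat).
  { intros n Hn. pose proof (pos_INR n). split; [apply Nat.le_max_l|].
    apply pos_floor_le; [nra | nra | exact Hn]. }
  assert (HP1 : admissible_seq P (fun _ => 1%nat)) by (intros n Hn; specialize (HP n Hn); lia).
  apply (away_from_0_on_dominated f p q P (fun _ => 1%nat)); auto.
  - apply Hcond; [exact HP1|]. left. split; [reflexivity|].
    exists a. split; [|lra].
    apply is_lim_seq_pos_floor; [lra | intros n; apply pos_INR | apply is_lim_seq_INR].
  - assert (Hge1 := eventually_ge 1).
    unfold within. generalize (filter_and _ _ prod_eventually_ge Hge1). apply filter_imp.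
    intros n [Hprod Hn] HqK. destruct (Hpq n Hn) as (Hq1 & Hqp & Hpn). split; [|exact Hq1].
    apply pos_floor_le; [pose proof (pos_INR n); nra | | lia].
    apply le_INR in HqK. pose proof (pos_INR (p n)).
    assert (Hpq' : INR (p n) * INR (q n) <= INR (p n) * (INR K + 1))
      by (apply Rmult_le_compat_l; lra).
    apply Rle_trans with (c / 2 / (INR K + 1) * INR n).
    + apply Rmult_le_compat_r; [apply pos_INR | apply Rmin_r].
    + apply Rmult_le_reg_r with (INR K + 1); [exact HK|].
      replace (c / 2 / (INR K + 1) * INR n * (INR K + 1)) with (c / 2 * INR n)
        by (field; lra).
      lra.
Qed.

Lemma away_on_balanced (k : nat) : away_from_0_on (fun n => p n <= S k * q n)%nat F.
Proof.
  assert (Hk : 0 < INR (S k)) by (apply lt_0_INR; lia).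
  assert (He : 0 < c / 2 / INR (S k)) by (apply Rdiv_lt_0_compat; lra).
  set (b := Rmin 1 (sqrt (c / 2 / INR (S k)))).
  assert (Hb0 : 0 < b) by (apply Rmin_pos; [lra | now apply sqrt_lt_R0]).
  assert (Hb1 : b <= 1) by apply Rmin_l.
  set (s n := pos_floor (b * sqrt (INR n))).
  assert (Hs : admissible_seq s s).
  { intros n Hn. assert (Hsn : (s n <= n)%nat).
    { apply le_INR in Hn. simpl in Hn. pose proof (sqrt_pos (INR n)).
      assert (Hsqrt : sqrt (INR n) <= INR n).
      { rewrite <- (sqrt_square (INR n)) at 2 by lra. apply sqrt_le_1_alt. nra. }
      apply pos_floor_le; [nra | nra | now apply INR_le]. }
    split; [apply Nat.le_max_l | lia]. }
  apply (away_from_0_on_dominated f p q s s); auto.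
  - assert (Hlim_s : is_lim_seq (fun n => INR (s n) / sqrt (INR n)) b).
    { apply is_lim_seq_pos_floor; [lra | intros n; apply sqrt_pos | exact is_lim_seq_sqrt_INR]. }
    apply Hcond; [exact Hs|]. right; right. split; exists b; auto.
  - assert (Hge1 := eventually_ge 1).
    unfold within. generalize (filter_and _ _ prod_eventually_ge Hge1). apply filter_imp.
    intros n [Hprod Hn] Hbal. destruct (Hpq n Hn) as (Hq1 & Hqp & Hpn).
    enough (Hsq : (s n <= q n)%nat) by lia.
    apply le_INR in Hbal. rewrite mult_INR in Hbal. pose proof (pos_INR (q n)).
    assert (Hsquare : c / 2 / INR (S k) * INR n <= INR (q n) * INR (q n)).
    { apply Rmult_le_reg_l with (INR (S k)); [exact Hk|].
      replace (INR (S k) * (c / 2 / INR (S k) * INR n)) with (c / 2 * INR n) by (field; lra).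
      nra. }
    apply sqrt_le_1_alt in Hsquare. rewrite sqrt_square, sqrt_mult_alt in Hsquare by lra.
    apply pos_floor_le; [pose proof (sqrt_pos (INR n)); nra | | exact Hq1].
    apply Rle_trans with (2 := Hsquare), Rmult_le_compat_r; [apply sqrt_pos | apply Rmin_r].
Qed.

Lemma steep_on_extends_to_cond_ii (T : nat -> Prop) :
  (forall m, within T eventually (fun n => m < q n /\ S m * q n < p n)%nat) ->
  exists p' q', admissible_seq p' q' /\ cond_ii p' q' /\
    forall n, T n -> p' n = p n /\ q' n = q n.
Proof.
  intros Hsteep.
  exists (patch T p (steep_ref c)), (patch T q fourth_root). split; [|split].
  - intros n Hn. unfold patch. destruct (excluded_middle_informative (T n)).
    + now apply Hpq.
    + now apply steep_ref_admissible.
  - split; [|split].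
    + apply is_lim_seq_ext with (patch T (fun n => INR (q n)) (fun n => INR (fourth_root n))).
      { intros n. unfold patch. now destruct (excluded_middle_informative (T n)). }
      apply is_lim_seq_patch;
        [exact (filterlim_steep_q p q T Hsteep) | exact is_lim_seq_fourth_root].
    + apply is_lim_seq_ext with (patch T (fun n => INR (q n) / INR (p n))
        (fun n => INR (fourth_root n) / INR (steep_ref c n))).
      { intros n. unfold patch. now destruct (excluded_middle_informative (T n)). }
      apply is_lim_seq_patch;
        [exact (filterlim_steep_ratio p q T Hsteep) | now apply is_lim_seq_steep_ref_ratio].
    + exists c. split; [|exact Hc].
      apply is_lim_seq_ext with (patch T (fun n => INR (p n) * INR (q n) / INR n)
        (fun n => INR (steep_ref c n) * INR (fourth_root n) / INR n)).
      { intros n. unfold patch. now destruct (excluded_middle_informative (T n)). }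
      apply is_lim_seq_patch; [|now apply is_lim_seq_steep_ref_prod].
      eapply filterlim_filter_le_1; [apply filter_le_within | exact Hlim].
  - intros n HTn. unfold patch. now destruct (excluded_middle_informative (T n)).
Qed.

Lemma away_on_steep : exists k, away_from_0_on (fun n => k < q n /\ S k * q n < p n)%nat F.
Proof.
  apply NNPP. intros Hnone.
  assert (Hfreq : forall k N, exists n, (N <= n)%nat /\
            ((k < q n /\ S k * q n < p n)%nat /\ F n < / INR (S k))).
  { intros k N. apply NNPP. intros Hno. apply Hnone. exists k, (/ INR (S k)).
    split; [apply Rinv_0_lt_compat, lt_0_INR; lia|].
    exists N. intros n Hn Hsteep. apply Rnot_lt_le. intros Hsmall. apply Hno. now exists n. }
  destruct (increasing_choice _ Hfreq) as [phi [Hphi_incr Hphi]].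
  set (Img n := exists k, phi k = n).
  assert (Hphi_ge : forall k, (k <= phi k)%nat).
  { induction k as [|k IH]; [lia|]. specialize (Hphi_incr k (S k) (Nat.lt_succ_diag_r k)). lia. }
  destruct (steep_on_extends_to_cond_ii Img) as (p' & q' & Hadm & Hii & Hagree).
  { intros m. exists (phi m). intros n Hn [k <-].
    assert (Hmk : (m <= k)%nat).
    { destruct (le_lt_dec m k) as [Hle | Hlt]; [exact Hle|].
      specialize (Hphi_incr k m Hlt). lia. }
    destruct (Hphi k) as [[Hkq Hkp] _]. split; nia. }
  destruct (away_from_0_on_dominated f p q p' q' Img Hf Hpq Hadm) as [d [Hd [N HN]]].
  - apply Hcond; [exact Hadm | now right; left].
  - exists 0%nat. intros n _ HImg. destruct (Hagree n HImg) as [-> ->]. lia.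
  - destruct (INR_unbounded (/ d)) as [m Hm].
    set (k := Nat.max m N).
    assert (HdF := HN (phi k) ltac:(specialize (Hphi_ge k); lia) (ex_intro _ k eq_refl)).
    destruct (Hphi k) as [_ Hsmall].
    assert (Hk : INR m <= INR k) by (apply le_INR; lia).
    assert (Hinv : / INR (S k) < d).
    { rewrite <- (Rinv_inv d). apply Rinv_lt_contravar.
      - apply Rmult_lt_0_compat; [now apply Rinv_0_lt_compat | apply lt_0_INR; lia].
      - rewrite S_INR. lra. }
    unfold F in *. lra.
Qed.

End Reduction.

Theorem lemma2p15 (f : nat -> nat -> nat -> R) :
  admissible_f f ->
  (forall p q : nat -> nat, admissible_seq p q ->
     (cond_i p q \/ cond_ii p q \/ cond_iii p q) -> liminf_pos f p q) ->
  forall p q : nat -> nat, admissible_seq p q ->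
    lim_in_pos (fun n => INR (p n) * INR (q n) / INR n) ->
    liminf_pos f p q.
Proof.
  intros Hf Hcond p q Hpq [c [Hlim Hc]].
  destruct (away_on_steep f Hf Hcond p q Hpq c Hc Hlim) as [k Hsteep].
  apply LimInf_seq_gt_0_iff.
  apply away_from_0_on_sub with
    (fun n => (q n <= k \/ p n <= S k * q n) \/ (k < q n /\ S k * q n < p n))%nat.
  - intros n _. lia.
  - apply away_from_0_on_or; [apply away_from_0_on_or | exact Hsteep].
    + exact (away_on_bounded_q f Hf Hcond p q Hpq c Hc Hlim k).
    + exact (away_on_balanced f Hf Hcond p q Hpq c Hc Hlim k).
Qed.
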